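(* Let $G$ be a connected graph and $\varphi$ a $\mathbb{T}$-gain on $G$ such that $\varphi(\overrightarrow{E}(G))\subseteq\{a+ib\in\mathbb{T}:a\ge0\}$. Then $\lambda_1(A(\Phi))\le\rho(A(\Phi))\le3\lambda_1(A(\Phi))$, where $\Phi=(G,\varphi)$.
   Context: Graphs are finite, simple and undirected. $\mathbb{T}=\{z\in\mathbb{C}:|z|=1\}$. $\overrightarrow{E}(G)$ is the set of oriented edges ($\overrightarrow{e_{st}}$ and $\overrightarrow{e_{ts}}$ for each edge $e_{st}$). A $\mathbb{T}$-gain on $G$ is a map $\varphi:\overrightarrow{E}(G)\to\mathbb{T}$ with $\varphi(\overrightarrow{e_{ts}})=\varphi(\overrightarrow{e_{st}})^{-1}$. $A(\Phi)$ is the Hermitian matrix with $(s,t)$ entry $\varphi(\overrightarrow{e_{st}})$ if $v_s\sim v_t$, else $0$. $\lambda_1$ denotes the largest eigenvalue and $\rho$ the spectral radius. *)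

(* Complex scalars: an arbitrary numClosedFieldType C
   (e.g. the complex numbers R[i] over a real closed field). *)
From mathcomp Require Import all_boot all_order all_algebra.
Set Implicit Arguments. Unset Strict Implicit. Unset Printing Implicit Defensive.
Import Order.TTheory GRing.Theory Num.Theory.
Local Open Scope ring_scope.

Definition simple_graph n (e : rel 'I_n) : Prop :=
  (forall s t, e s t = e t s) /\ (forall s, ~~ e s s).

Definition connected_graph n (e : rel 'I_n) : Prop :=
  (0 < n)%N /\ forall s t, connect e s t.

(* A T-gain: on each oriented edge (s,t) a unit complex number,
   with phi(t,s) = phi(s,t)^-1. Values off edges are irrelevant. *)
Definition T_gain (C : numClosedFieldType) n (e : rel 'I_n) (phi : 'I_n -> 'I_n -> C) : Prop :=
  forall s t, e s t -> `|phi s t| = 1 /\ phi t s = (phi s t)^-1.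

Definition gain_adj (C : numClosedFieldType) n (e : rel 'I_n) (phi : 'I_n -> 'I_n -> C)
  : 'M[C]_n := \matrix_(s, t) (if e s t then phi s t else 0).

Definition is_lambda1 (C : numClosedFieldType) n (A : 'M[C]_n) (l : C) : Prop :=
  eigenvalue A l /\ forall m, eigenvalue A m -> m <= l.

Definition is_spectral_radius (C : numClosedFieldType) n (A : 'M[C]_n) (r : C) : Prop :=
  (exists2 m, eigenvalue A m & `|m| = r) /\ forall m, eigenvalue A m -> `|m| <= r.

(* A(Phi) is Hermitian, so lambda_1 <= rho is immediate and rho = |m| for some
   eigenvalue m; only m < 0 needs work.  Let x be an eigenvector for m.  For
   every pair (s, t) the weight x_s x_t^* + x_s^* x_t + 2 |x_s| |x_t|, which is
   2 (Re z + |z|) for z = x_s x_t^*, is nonnegative and symmetric in (s, t),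
   while A_st + A_ts = 2 Re A_st >= 0; hence
   x A x^* + conj(x) A conj(x)^* + 2 |x| A |x|^* >= 0.  The first term is
   m |x|^2 and, by the Rayleigh bound, each of the others is at most
   lambda_1 |x|^2, since conj(x) and |x| have the same norm as x.  Hence
   m + 3 lambda_1 >= 0. *)

From mathcomp Require Import all_boot all_order all_algebra.
From mathcomp Require Import sesquilinear spectral.
From mathcomp Require Import ring.
Import Order.TTheory GRing.Theory Num.Theory Num.Def.
Set Implicit Arguments.
Unset Strict Implicit.
Unset Printing Implicit Defensive.
Local Open Scope ring_scope.
Local Open Scope sesquilinear_scope.

Local Notation "''[' u , v ]" := (dotmx u v) : ring_scope.
Local Notation "''[' u ]" := (dotmx u u) : ring_scope.

Lemma exists_real_argmax (R : numDomainType) (I : finType) (i0 : I) (f : I -> R) :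
  (forall i, f i \is Num.real) -> exists i, forall j, f j <= f i.
Proof.
move=> fR; suff [i fi_max] : exists i, {in enum I, forall j, f j <= f i}.
  by exists i => j; apply: fi_max; rewrite mem_enum.
elim: (enum I) => [|a s [i fi_max]]; first by exists i0.
have [fai | fia] := real_leP (fR a) (fR i).
- by exists i => j; rewrite inE => /predU1P[-> // | /fi_max].
- exists a => j; rewrite inE => /predU1P[-> // | /fi_max fji].
  exact: le_trans fji (ltW fia).
Qed.

Section DotmxExpansion.
Variables (C : numClosedFieldType) (n : nat).

Lemma dotmx_mulmxE (A : 'M[C]_n) (u v : 'rV_n) :
  '[u *m A, v] = \sum_s \sum_t u 0 s * A s t * (v 0 t)^*.
Proof.
rewrite dotmxE mxE exchange_big; apply: eq_bigr => t _.
by rewrite !mxE big_distrl; apply: eq_bigr => s _; rewrite ?mxE.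
Qed.

Lemma dnorm_dotmxE (u : 'rV[C]_n) : '[u] = \sum_i `|u 0 i| ^+ 2.
Proof. by rewrite dotmxE mxE; apply: eq_bigr => i _; rewrite !mxE normCK. Qed.

Lemma dotmx_diagE (d w : 'rV[C]_n) :
  '[w *m diag_mx d, w] = \sum_j d 0 j * `|w 0 j| ^+ 2.
Proof.
rewrite dotmxE mxE; apply: eq_bigr => j _.
by rewrite mul_mx_diag !mxE normCK mulrCA mulrA.
Qed.

Lemma dotmx_unitary (P : 'M[C]_n) (u v : 'rV_n) :
  P \is unitarymx -> '[u *m P, v *m P] = '[u, v].
Proof.
by move=> P_unitary; rewrite !dotmxE trmx_mul map_mxM mulmxA mulmxtVK.
Qed.

End DotmxExpansion.

Section UnitarilyDiagonalized.
Variables (C : numClosedFieldType) (n : nat) (A P : 'M[C]_n) (d : 'rV[C]_n).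
Hypotheses (P_unitary : P \is unitarymx) (A_eq : A = P^t* *m diag_mx d *m P).

Lemma diagonalized_mulmx (w : 'rV_n) : w *m P *m A = w *m diag_mx d *m P.
Proof. by rewrite A_eq !mulmxA mulmxtVK. Qed.

Lemma diagonalized_eigenvalueP a : eigenvalue A a <-> exists j, a = d 0 j.
Proof.
have P_free : row_free P by rewrite row_free_unit unitarymx_unit.
split=> [/eigenvalueP[v vA v_neq0] | [j ->]].
  set w := v *m P^t*; have v_eq : v = w *m P by rewrite mulmxKtV.
  have wD : w *m diag_mx d = a *: w.
    apply: (row_free_inj P_free).
    by rewrite /= -diagonalized_mulmx -scalemxAl -v_eq vA.
  have /matrix0Pn[i [j wj_neq0]] : w != 0.
    by apply: contraNneq v_neq0 => w0; rewrite v_eq w0 mul0mx.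
  exists j; apply/eqP; move/matrixP: wD => /(_ i j).
  rewrite mul_mx_diag mxE [in RHS]mxE mulrC => /eqP.
  by rewrite -subr_eq0 -mulrBl mulf_eq0 (negPf wj_neq0) orbF subr_eq0 eq_sym.
apply/eigenvalueP; exists ('e_j *m P).
  by rewrite diagonalized_mulmx -rowE row_diag_mx scalemxAl.
rewrite mulmx_free_eq0 //; apply/eqP => /matrixP/(_ 0 j)/eqP.
by rewrite !mxE !eqxx oner_eq0.
Qed.

Lemma diagonalized_dotmx_le l :
  (forall j, d 0 j <= l) -> forall v, '[v *m A, v] <= l * '[v].
Proof.
move=> d_le v; rewrite -(mulmxKtV v P_unitary) //; move: (v *m P^t*) => w.
rewrite diagonalized_mulmx !dotmx_unitary // dotmx_diagE dnorm_dotmxE.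
rewrite mulr_sumr; apply: ler_sum => j _.
apply: ler_wpM2r; [exact: exprn_ge0 | exact: d_le].
Qed.

End UnitarilyDiagonalized.

Section Hermitian.
Variables (C : numClosedFieldType) (n : nat) (A : 'M[C]_n).
Hypothesis A_herm : A \is hermsymmx.

Lemma hermitian_spectral_decomp :
  A = (spectralmx A)^t* *m diag_mx (spectral_diag A) *m spectralmx A.
Proof.
rewrite -invmx_unitary ?spectral_unitarymx //.
exact/orthomx_spectralP/hermitian_normalmx.
Qed.

Let spectral_eigenvalueP :=
  diagonalized_eigenvalueP (spectral_unitarymx A) hermitian_spectral_decomp.

Let spectral_diag_eigenvalue j : eigenvalue A (spectral_diag A 0 j).
Proof. by apply/spectral_eigenvalueP; exists j. Qed.

Lemma hermitian_eigenvalue_real a : eigenvalue A a -> a \is Num.real.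
Proof.
case/spectral_eigenvalueP => j ->.
by have /mxOverP := hermitian_spectral_diag_real A_herm; apply.
Qed.

Lemma hermitian_lambda1_exists : (0 < n)%N -> exists l, is_lambda1 A l.
Proof.
move=> n_gt0; have [i i_max] := exists_real_argmax (Ordinal n_gt0)
  (fun j => hermitian_eigenvalue_real (spectral_diag_eigenvalue j)).
exists (spectral_diag A 0 i); split=> // m /spectral_eigenvalueP[j ->].
exact: i_max.
Qed.

Lemma hermitian_spectral_radius_exists :
  (0 < n)%N -> exists r, is_spectral_radius A r.
Proof.
move=> n_gt0; have [i i_max] := exists_real_argmax (Ordinal n_gt0)
  (fun j => normr_real (spectral_diag A 0 j)).
exists `|spectral_diag A 0 i|; split; first by exists (spectral_diag A 0 i).
by move=> m /spectral_eigenvalueP[j ->]; exact: i_max.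
Qed.

Lemma hermitian_dotmx_le_lambda1 l v :
  is_lambda1 A l -> '[v *m A, v] <= l * '[v].
Proof.
case=> _ l_max.
apply: (diagonalized_dotmx_le (spectral_unitarymx A) hermitian_spectral_decomp).
by move=> j; apply/l_max/spectral_diag_eigenvalue.
Qed.

End Hermitian.

Lemma cross_conj_add_norm_ge0 (C : numClosedFieldType) (a b : C) :
  0 <= a * b^* + a^* * b + 2 * (`|a| * `|b|).
Proof.
set z := a * b^*.
have -> : a * b^* + a^* * b + 2 * (`|a| * `|b|) = 2 * ('Re z + `|z|).
  rewrite ReE mulrDr [2 * (_ / 2)]mulrC divfK ?pnatr_eq0 // normrM norm_conjC.
  by rewrite rmorphM /= conjCK.
rewrite mulr_ge0 // -[X in _ + X]opprK subr_ge0.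
exact: real_lerNnormlW (Creal_Re z) (leif_normC_Re_Creal z).
Qed.

Lemma sum_sym_weight_ge0 (R : numDomainType) (I : finType) (a c : I -> I -> R) :
  (forall s t, 0 <= a s t + a t s) -> (forall s t, c t s = c s t) ->
  (forall s t, 0 <= c s t) -> 0 <= \sum_s \sum_t a s t * c s t.
Proof.
move=> a_ge0 c_sym c_ge0; rewrite -(pmulr_rge0 _ (ltr0n _ 2)) mulr2n mulrDl mul1r.
rewrite [X in _ + X]exchange_big -big_split; apply: sumr_ge0 => s _.
rewrite -big_split; apply: sumr_ge0 => t _ /=.
by rewrite c_sym -mulrDl mulr_ge0.
Qed.

Section NonnegativeRealPart.
Variables (C : numClosedFieldType) (n : nat) (A : 'M[C]_n).
Hypotheses (A_herm : A \is hermsymmx) (ReA_ge0 : forall s t, 0 <= 'Re (A s t)).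

Lemma dotmx_conj_norm_ge0 (x : 'rV[C]_n) :
  0 <= '[x *m A, x] + '[map_mx conjC x *m A, map_mx conjC x]
       + 2 * '[map_mx normr x *m A, map_mx normr x].
Proof.
have A_adj s t : A t s = (A s t)^*.
  by have /is_hermitianmxP/matrixP/(_ t s) := A_herm; rewrite expr0 scale1r !mxE.
pose c s t := x 0 s * (x 0 t)^* + (x 0 s)^* * x 0 t + 2 * (`|x 0 s| * `|x 0 t|).
have -> : '[x *m A, x] + '[map_mx conjC x *m A, map_mx conjC x]
       + 2 * '[map_mx normr x *m A, map_mx normr x] = \sum_s \sum_t A s t * c s t.
  rewrite !dotmx_mulmxE mulr_sumr -!big_split; apply: eq_bigr => s _.
  rewrite mulr_sumr -!big_split; apply: eq_bigr => t _.
  by rewrite !mxE conjCK conj_normC /c /=; ring.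
apply: sum_sym_weight_ge0 => s t; last exact: cross_conj_add_norm_ge0.
- have -> : A s t + A t s = 2 * 'Re (A s t).
    by rewrite (A_adj s t) ReE mulrC divfK ?pnatr_eq0.
  exact: mulr_ge0 (ler0n _ 2) (ReA_ge0 s t).
- by rewrite /c; ring.
Qed.

Lemma eigenvalue_opp_le_3lambda1 m l :
  eigenvalue A m -> is_lambda1 A l -> - m <= 3 * l.
Proof.
case/eigenvalueP=> x xA x_neq0 lP.
have x_conjE : '[map_mx conjC x] = '[x].
  by rewrite !dnorm_dotmxE; apply: eq_bigr => i _; rewrite mxE norm_conjC.
have x_normE : '[map_mx normr x] = '[x].
  by rewrite !dnorm_dotmxE; apply: eq_bigr => i _; rewrite mxE normr_id.
have : 0 <= (m + 3 * l) * '[x].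
  apply: le_trans (dotmx_conj_norm_ge0 x) _.
  rewrite xA dotmxE -scalemxAl mxE -dotmxE.
  have := hermitian_dotmx_le_lambda1 A_herm (map_mx conjC x) lP.
  have := hermitian_dotmx_le_lambda1 A_herm (map_mx normr x) lP.
  rewrite x_conjE x_normE => le_norm le_conj.
  have -> : (m + 3 * l) * '[x] = m * '[x] + l * '[x] + 2 * (l * '[x]) by ring.
  by apply: lerD; [rewrite lerD2l | rewrite ler_wpM2l].
by rewrite pmulr_lge0 ?dnorm_gt0 // addrC -lerBlDr sub0r.
Qed.

Theorem lambda1_le_spectral_radius_le_3lambda1 l r :
  is_lambda1 A l -> is_spectral_radius A r -> l <= r <= 3 * l.
Proof.
move=> [l_eig l_max] [[m m_eig <-] r_max].
have l_real := hermitian_eigenvalue_real A_herm l_eig.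
have m_real := hermitian_eigenvalue_real A_herm m_eig.
rewrite (le_trans (real_ler_norm l_real)) ?r_max //=.
have [m_ge0 | m_lt0] := real_ge0P m_real.
- have m_le_l := l_max m m_eig.
  by rewrite (le_trans m_le_l) // ler_peMl ?ler1n // (le_trans m_ge0).
- exact: eigenvalue_opp_le_3lambda1 m_eig (conj l_eig l_max).
Qed.

End NonnegativeRealPart.

Section GainAdjacency.
Variables (C : numClosedFieldType) (n : nat) (e : rel 'I_n) (phi : 'I_n -> 'I_n -> C).

Lemma gain_adj_hermitian :
  symmetric e -> T_gain e phi -> gain_adj e phi \is hermsymmx.
Proof.
move=> e_sym gain; apply/is_hermitianmxP; rewrite expr0 scale1r.
apply/matrixP => s t; rewrite !mxE e_sym.
case: ifP => [ets | _]; last by rewrite conjC0.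
have [phi_ts_unit ->] := gain t s ets.
by rewrite invC_norm phi_ts_unit expr1n invr1 mul1r.
Qed.

Lemma gain_adj_Re_ge0 :
  (forall s t, e s t -> 0 <= 'Re (phi s t)) ->
  forall s t, 0 <= 'Re (gain_adj e phi s t).
Proof.
by move=> Re_phi s t; rewrite mxE; case: ifP => [/Re_phi | _]; rewrite ?raddf0.
Qed.

End GainAdjacency.

Theorem theorem5p1 (C : numClosedFieldType) (n : nat) (e : rel 'I_n)
    (phi : 'I_n -> 'I_n -> C) :
  simple_graph e -> connected_graph e -> T_gain e phi ->
  (forall s t, e s t -> 0 <= 'Re (phi s t)) ->
  exists l1, is_lambda1 (gain_adj e phi) l1 /\
  exists r, is_spectral_radius (gain_adj e phi) r /\ l1 <= r <= 3 * l1.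
Proof.
(* Connectedness is only used through n > 0. *)
move=> [e_sym _] [n_gt0 _] gain Re_phi.
have A_herm := gain_adj_hermitian e_sym gain.
have [l1 l1P] := hermitian_lambda1_exists A_herm n_gt0.
have [r rP] := hermitian_spectral_radius_exists A_herm n_gt0.
exists l1; split=> //; exists r; split=> //.
exact: (lambda1_le_spectral_radius_le_3lambda1 A_herm (gain_adj_Re_ge0 Re_phi) l1P rP).
Qed.
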